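(* Let $q$ be a prime power and $M\geq 2$ an integer. Let $g\in\mathbb{F}_q[x]$ be a monic irreducible polynomial with $g(0)\neq 0$ and $g\neq g^*$ (so that $f=gg^*$ is a type $2$ polynomial). Then every irreducible factor $h$ of $g(x^M)$ is of type $2$, i.e. satisfies $h\neq h^*$ (it is not self-reciprocal).
   Context: For a monic polynomial $f\in\mathbb{F}_q[x]$ of degree $r$ with $f(0)\neq0$, its dual is $f^*(x)=f(0)^{-1}x^rf(x^{-1})$, and $f$ is self-reciprocal if $f=f^*$. A type $2$ polynomial is one of the form $gg^*$ with $g$ irreducible and $g\neq g^*$. *)

From HB Require Import structures.
From mathcomp Require Import all_boot all_order all_algebra all_field.
Set Implicit Arguments. Unset Strict Implicit. Unset Printing Implicit Defensive.
Import GRing.Theory.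
Local Open Scope ring_scope.

(* The dual f^* = f(0)^{-1} x^r f(x^{-1}) of a polynomial f of degree r:
   x^r f(x^{-1}) is the coefficient reversal sum_{i<=r} f_{r-i} x^i. *)
Definition dual_poly (F : fieldType) (f : {poly F}) : {poly F} :=
  (f`_0)^-1 *: \poly_(i < size f) f`_((size f).-1 - i).

Definition self_reciprocal (F : fieldType) (f : {poly F}) : Prop :=
  f = dual_poly f.

(* If h = h^* divides g(x^M), then h also divides g(x^M)^* = g^*(x^M), because
   the dual is multiplicative on polynomials with nonzero constant term and
   commutes with x |-> x^M.  But g is irreducible and g^* is a monic polynomial
   of the same degree different from g, so g and g^* are coprime; composing with
   x^M preserves coprimality, so h would be a constant. *)

From HB Require Import structures.
From mathcomp Require Import all_boot all_order all_algebra all_field.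
From mathcomp Require Import zify.

Set Implicit Arguments.
Unset Strict Implicit.
Unset Printing Implicit Defensive.
Local Open Scope ring_scope.
Import GRing.Theory.

Section PolyReversal.
Variable R : comNzRingType.
Implicit Types p q : {poly R}.

Lemma coef0_neq0_poly p : p`_0 != 0 -> p != 0.
Proof. by apply: contraNneq => ->; rewrite coef0. Qed.

(* x^d p(1/x), meaningful when size p <= d.+1. *)
Definition rev_poly d p := \poly_(i < d.+1) p`_(d - i).

Lemma rev_polyD d p q : rev_poly d (p + q) = rev_poly d p + rev_poly d q.
Proof. by apply/polyP => i; rewrite !(coefD, coef_poly); case: ifP; rewrite ?addr0. Qed.

Lemma rev_polyZ c d p : rev_poly d (c *: p) = c *: rev_poly d p.
Proof. by apply/polyP => i; rewrite !(coefZ, coef_poly); case: ifP; rewrite ?mulr0. Qed.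

HB.instance Definition _ d := GRing.isSemilinear.Build R {poly R} {poly R} _
  (rev_poly d) (rev_polyZ^~ d, rev_polyD d).

Lemma rev_polyXn d k : (k <= d)%N -> rev_poly d 'X^k = 'X^(d - k).
Proof.
move=> le_kd; apply/polyP => i; rewrite coef_poly !coefXn.
case: ltnP => lt_id; last by rewrite (_ : (i == d - k)%N = false) //; lia.
by rewrite (_ : (d - i == k)%N = (i == d - k)%N) //; apply/eqP/eqP; lia.
Qed.

Lemma rev_polyE d p : (size p <= d.+1)%N ->
  rev_poly d p = \sum_(i < d.+1) p`_i *: 'X^(d - i).
Proof.
move=> sp; rewrite -{1}(take_poly_id sp) /take_poly poly_def linear_sum.
by apply: eq_bigr => i _; rewrite linearZ /= rev_polyXn // -ltnS.
Qed.

Lemma rev_polyM a b p q : (size p <= a.+1)%N -> (size q <= b.+1)%N ->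
  rev_poly (a + b) (p * q) = rev_poly a p * rev_poly b q.
Proof.
move=> sp sq.
have expand_pq : p * q =
    \sum_(i < a.+1) \sum_(j < b.+1) (p`_i * q`_j) *: 'X^(i + j).
  rewrite -{1}(take_poly_id sp) -{1}(take_poly_id sq) /take_poly !poly_def.
  rewrite mulr_suml; apply: eq_bigr => i _; rewrite mulr_sumr.
  by apply: eq_bigr => j _; rewrite -scalerAl -scalerAr scalerA -exprD.
rewrite expand_pq (rev_polyE sp) (rev_polyE sq) linear_sum mulr_suml.
apply: eq_bigr => i _; rewrite linear_sum mulr_sumr; apply: eq_bigr => j _.
have := ltn_ord i; have := ltn_ord j => lt_jb lt_ia.
rewrite linearZ /= rev_polyXn; last by lia.
by rewrite -scalerAl -scalerAr scalerA -exprD; congr (_ *: 'X^_); lia.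
Qed.

Lemma rev_poly_comp_Xn d M p : (0 < M)%N -> (size p <= d.+1)%N ->
  rev_poly (d * M) (p \Po 'X^M) = rev_poly d p \Po 'X^M.
Proof.
move=> M_gt0 sp; apply/polyP => i.
rewrite coef_comp_poly_Xn // !coef_poly coef_comp_poly_Xn //.
case: ltnP => lt_i.
  rewrite dvdn_subr ?dvdn_mull //; case: ifP => // /dvdnP [t def_i]; subst i.
  have le_td : (t <= d)%N by rewrite -(leq_pmul2r M_gt0) -ltnS.
  by rewrite mulnK // ltnS le_td -mulnBl mulnK.
case: ifP => // /dvdnP [t def_i]; rewrite def_i mulnK // ltnNge.
by rewrite -(ltn_pmul2r M_gt0) -def_i lt_i.
Qed.

Lemma size_rev_poly d p : p`_0 != 0 -> size (rev_poly d p) = d.+1.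
Proof. by move=> p0; rewrite size_poly_eq // subnn. Qed.

Lemma lead_coef_rev_poly d p : p`_0 != 0 -> lead_coef (rev_poly d p) = p`_0.
Proof. by move=> p0; rewrite lead_coef_poly // subnn. Qed.

End PolyReversal.

Section DualPoly.
Variable F : fieldType.
Implicit Types f g h p q : {poly F}.

Lemma dual_polyE p : p != 0 -> dual_poly p = (p`_0)^-1 *: rev_poly (size p).-1 p.
Proof. by move=> p_neq0; rewrite /dual_poly /rev_poly prednK // size_poly_gt0. Qed.

Lemma size_dual_poly p : p`_0 != 0 -> size (dual_poly p) = size p.
Proof.
move=> p0; rewrite dual_polyE ?coef0_neq0_poly // size_scale ?invr_eq0 //.
by rewrite size_rev_poly // prednK // size_poly_gt0 coef0_neq0_poly.
Qed.

Lemma dual_poly_monic p : p`_0 != 0 -> dual_poly p \is monic.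
Proof.
move=> p0; rewrite dual_polyE ?coef0_neq0_poly // monicE lead_coefZ.
by rewrite lead_coef_rev_poly // mulVf.
Qed.

Lemma dual_polyM p q : p`_0 != 0 -> q`_0 != 0 ->
  dual_poly (p * q) = dual_poly p * dual_poly q.
Proof.
move=> p0 q0; have p_neq0 := coef0_neq0_poly p0; have q_neq0 := coef0_neq0_poly q0.
rewrite !dual_polyE ?mulf_neq0 //.
have sp := size_poly_gt0 p; have sq := size_poly_gt0 q.
rewrite p_neq0 in sp; rewrite q_neq0 in sq.
have -> : (size (p * q)).-1 = ((size p).-1 + (size q).-1)%N.
  by rewrite size_mul // -(prednK sp) -(prednK sq) addSn addnS.
rewrite rev_polyM ?leqSpred // coef0M invfM -scalerAl -scalerAr scalerA.
by rewrite mulrC.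
Qed.

Lemma dvdp_dual_poly h f : f`_0 != 0 -> h %| f -> dual_poly h %| dual_poly f.
Proof.
move=> f0 /dvdpP [k def_f]; move: (f0); rewrite def_f coef0M mulf_eq0 negb_or.
by case/andP => k0 h0; rewrite dual_polyM // dvdp_mull.
Qed.

Lemma dual_poly_comp_Xn M p : (0 < M)%N -> p`_0 != 0 ->
  dual_poly (p \Po 'X^M) = dual_poly p \Po 'X^M.
Proof.
move=> M_gt0 p0; have p_neq0 := coef0_neq0_poly p0.
have pM0 : (p \Po 'X^M)`_0 = p`_0 by rewrite coef_comp_poly_Xn // dvdn0 div0n.
have pM_neq0 : p \Po 'X^M != 0 by apply: coef0_neq0_poly; rewrite pM0.
rewrite !dual_polyE // size_comp_poly size_polyXn /= pM0 comp_polyZ.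
by rewrite rev_poly_comp_Xn ?prednK ?size_poly_gt0.
Qed.

Lemma coprimep_dual_poly g : irreducible_poly g -> g \is monic -> g`_0 != 0 ->
  g <> dual_poly g -> coprimep g (dual_poly g).
Proof.
move=> g_irr g_monic g0 g_nsr; rewrite irreducible_poly_coprime //.
apply: contra_notN g_nsr => g_dvd; apply/eqP.
by rewrite -eqp_monic ?dual_poly_monic // -(dvdp_size_eqp g_dvd) size_dual_poly.
Qed.

End DualPoly.

Theorem lemma4p18 (F : finFieldType) (M : nat) (g : {poly F}) :
  (2 <= M)%N ->
  g \is monic -> irreducible_poly g -> g`_0 != 0 -> g <> dual_poly g ->
  forall h : {poly F},
    h \is monic -> irreducible_poly h -> h %| (g \Po 'X^M) ->
    h <> dual_poly h.
Proof.
move=> M_ge2 g_monic g_irr g0 g_nsr h _ h_irr h_dvd h_sr.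
have M_gt0 : (0 < M)%N by apply: ltnW.
have gM0 : (g \Po 'X^M)`_0 != 0 by rewrite coef_comp_poly_Xn // dvdn0 div0n.
have h_dvd_dual : h %| dual_poly g \Po 'X^M.
  by rewrite h_sr -dual_poly_comp_Xn // dvdp_dual_poly.
have cop := coprimep_comp_poly 'X^M (coprimep_dual_poly g_irr g_monic g0 g_nsr).
have := coprimep_dvdl h_dvd_dual (coprimep_dvdr h_dvd cop).
by rewrite coprimepp gtn_eqF //; case: h_irr.
Qed.
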